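(* Let $f,g\in\mathrm{PF}$, and assume $f$ is mean Lipschitz smooth with mean Lipschitz constant $L^\mu_f$. Then the convolution $(f*g)(t)=\frac1{2\pi}\int_0^{2\pi}f(t-\tau)g(\tau)\,\mathrm d\tau$ is Lipschitz continuous with Lipschitz constant at most $L^\mu_f$.
   Context: $\mathrm{PF}$ denotes the set of functions $f:\mathbb R\to\mathbb C$ that are $2\pi$-periodic, satisfy $\int_0^{2\pi}f(t)\,\mathrm dt=0$, and $\sup_t|f(t)|\le1$. A $2\pi$-periodic function $f$ is mean Lipschitz smooth with mean Lipschitz constant $L^\mu_f$ if for all $\delta\in(0,\pi]$, $$\frac1{2\pi}\int_0^{2\pi}\sup_{r\in[-\delta,\delta]}|f(t+r)-f(t)|\,\mathrm dt\le L^\mu_f\,\delta.$$ Here a function $u$ is Lipschitz continuous with constant $L$ if $\sup_{r\in[-\delta,\delta]}|u(t+r)-u(t)|\le L\delta$ for all $t\in\mathbb R$, $\delta>0$. *)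

From mathcomp Require Import all_boot all_order all_algebra.
From mathcomp Require Import all_classical all_reals all_analysis.
From mathcomp Require Export complex.
Import Order.TTheory GRing.Theory Num.Theory.

Set Implicit Arguments.
Unset Strict Implicit.
Unset Printing Implicit Defensive.

Local Open Scope classical_set_scope.
Local Open Scope ring_scope.

Section Defs.
Variable R : realType.

Definition cmod (z : R[i]) : R := Normc.normc z.

Definition cintegral (D : set R) (h : R -> R[i]) : R[i] :=
  Complex (Rintegral lebesgue_measure D (fun x => complex.Re (h x)))
          (Rintegral lebesgue_measure D (fun x => complex.Im (h x))).

Definition periodic2pi (f : R -> R[i]) : Prop :=
  forall t : R, f (t + 2 * pi) = f t.

Definition in_PF (f : R -> R[i]) : Prop :=
  [/\ periodic2pi f,
      measurable_fun setT (fun x => complex.Re (f x)),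
      measurable_fun setT (fun x => complex.Im (f x)),
      cintegral `[0, 2 * pi] f = 0
    & forall t : R, cmod (f t) <= 1].

Definition mean_lipschitz_smooth (f : R -> R[i]) (L : R) : Prop :=
  forall d : R, 0 < d <= pi ->
    (((2 * pi)^-1)%:E *
      \int[lebesgue_measure]_(t in `[0%R, (2 * pi)%R])
         ereal_sup [set (cmod (f (t + r) - f t))%:E | r in `[(- d)%R, d]]
     <= (L * d)%:E)%E.

Definition lipschitz_cont (u : R -> R[i]) (L : R) : Prop :=
  forall t d : R, 0 < d ->
    (ereal_sup [set (cmod (u (t + r) - u t))%:E | r in `[(- d)%R, d]]
     <= (L * d)%:E)%E.

Definition convolution (f g : R -> R[i]) (t : R) : R[i] :=
  ((2 * pi)^-1)%:C%C * cintegral `[0, 2 * pi] (fun tau => f (t - tau) * g tau).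

End Defs.

(* Writing the difference of two values of f * g as one integral and
   substituting s = t - tau gives
     |(f * g)(t + r) - (f * g)(t)| <= 1/(2 pi) int_0^(2 pi) |f(s + r) - f(s)| ds,
   because |g| <= 1 and a 2 pi-periodic function has the same integral over
   every period.  For |r| <= d <= pi the integrand is dominated by
   sup_(|r'| <= d) |f(s + r') - f(s)|, whose mean is at most L d.  For d > pi,
   the periodicity of f * g lets us replace r by a representative in
   [-pi, pi), which gives the bound L pi <= L d; here L >= 0 because the
   hypothesis at d = pi bounds a nonnegative mean by L pi. *)

From mathcomp Require Import all_boot all_order all_algebra.
From mathcomp Require Import all_classical all_reals all_analysis.
From mathcomp Require Import complex measurable_realfun ring lra.
Import Order.TTheory GRing.Theory Num.Theory.

Set Implicit Arguments.
Unset Strict Implicit.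
Unset Printing Implicit Defensive.

Local Open Scope classical_set_scope.
Local Open Scope ring_scope.

Lemma periodicz (U : zmodType) (V : Type) (f : U -> V) (T : U) :
  (forall u, f (u + T) = f u) -> forall (k : int) a, f (a + T *~ k) = f a.
Proof.
move=> fT; have fTn n a : f (a + T *+ n) = f a.
  by elim: n a => [|n ih] a; rewrite ?addr0 // mulrS addrA ih fT.
move=> [n|n] a; first exact: fTn.
by rewrite NegzE mulrNz -[in RHS](subrK (T *+ n.+1) a) fTn.
Qed.

Lemma intmul_shift_itv (R : archiRealFieldType) (p a : R) : 0 < p ->
  exists k : int, 0 <= a - p *~ k < p.
Proof.
move=> p0; exists (Num.floor (a / p)); rewrite -mulrzr.
have /andP[] := Num.Theory.floor_itv (a / p); rewrite intrD.
rewrite -(ler_pM2r p0) -(ltr_pM2r p0) divfK ?gt_eqF //.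
by move=> ? ?; apply/andP; split; nra.
Qed.

Section ge0_le_integral_nonmeasurable.
Local Open Scope ereal_scope.
Context d (T : measurableType d) (R : realType) (mu : {measure set T -> \bar R}).

(* No measurability of [f2] is assumed: the supremum in
   [mean_lipschitz_smooth] is not known to be measurable. *)
Lemma ge0_le_integral_nonmeasurable (D : set T) (f1 f2 : T -> \bar R) :
  (forall x, D x -> 0 <= f1 x) -> (forall x, D x -> f1 x <= f2 x) ->
  \int[mu]_(x in D) f1 x <= \int[mu]_(x in D) f2 x.
Proof.
move=> f10 f12; have f20 x : D x -> 0 <= f2 x.
  by move=> Dx; exact: le_trans (f10 _ Dx) (f12 _ Dx).
rewrite !ge0_integralE//; apply: ereal_sup_le => _ [h /= hf1 <-].
by exists h => //= x; exact: le_trans (hf1 x) (lee_restrict f12 x).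
Qed.

End ge0_le_integral_nonmeasurable.

Lemma measurable_fun_shift (R : realType) (c : R) :
  measurable_fun setT (fun x : R => x + c).
Proof. by apply: measurable_funD => //; exact: measurable_cst. Qed.

Lemma measurable_fun_reflect (R : realType) (c : R) :
  measurable_fun setT (fun x : R => c - x).
Proof. by apply: measurable_funB => //; exact: measurable_cst. Qed.

Section lebesgue_measure_preserving.
Context {R : realType}.
Local Notation mu := (@lebesgue_measure R).
Variable phi : R -> R.
Hypothesis mphi : measurable_fun setT phi.
Hypothesis phi_ocitv : forall a b : R, mu (phi @^-1` `]a, b]) = mu `]a, b].

Let pushforward_lebesgue_measure A : measurable A -> pushforward mu phi A = mu A.
Proof.
(* The cast selects the measurable structure of [measurableTypeR R], on
   which [lebesgue_measure_unique] is stated. *)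
move=> mA; apply/esym; apply: (@lebesgue_measure_unique R
  (pushforward mu (phi : measurableTypeR R -> measurableTypeR R)) _ A mA).
by move=> _ [[a b] _ <-]; exact/esym/phi_ocitv.
Qed.

Lemma ge0_integral_preimage (D : set R) (psi : R -> \bar R) : measurable D ->
  measurable_fun D psi -> (forall x, D x -> (0 <= psi x)%E) ->
  (\int[mu]_(x in phi @^-1` D) psi (phi x) = \int[mu]_(y in D) psi y)%E.
Proof.
move=> mD mpsi psi0.
have psi0_in : {in D, forall y, (0 <= psi y)%E} by move=> y /[!inE]; exact: psi0.
rewrite -[LHS]/(\int[mu]_(x in _) (psi \o phi) x)%E.
rewrite -(@ge0_integral_pushforward _ _ (measurableTypeR R) (measurableTypeR R)
  R phi mphi mu D psi mD mpsi psi0_in).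
by apply: eq_measure_integral => A mA _; exact: pushforward_lebesgue_measure.
Qed.

End lebesgue_measure_preserving.

Section lebesgue_integral_change_of_variables.
Context {R : realType}.
Local Notation mu := (@lebesgue_measure R).
Variable psi : R -> \bar R.
Hypotheses (mpsi : measurable_fun setT psi) (psi_ge0 : forall x, (0 <= psi x)%E).

Lemma ge0_integral_itv_shift (c a b : R) :
  (\int[mu]_(x in `[a, b]) psi (x + c) =
   \int[mu]_(x in `[(a + c)%R, (b + c)%R]) psi x)%E.
Proof.
have preimage_itv (b1 b2 : bool) (x y : R) :
    (fun z => z + c) @^-1` [set` Interval (BSide b1 x) (BSide b2 y)] =
    [set` Interval (BSide b1 (x - c)) (BSide b2 (y - c))].
  by apply/seteqP; split=> z; case: b1 b2 => -[];
    rewrite /= !in_itv /= ?lerBlDr ?ltrBlDr ?lerBrDr ?ltrBrDr.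
have shift_ocitv x y : mu ((fun z => z + c) @^-1` `]x, y]) = mu `]x, y].
  rewrite preimage_itv !lebesgue_measure_itv /= !lte_fin ltrD2r -!EFinB.
  by congr (if _ then _%:E else _); ring.
rewrite -(@ge0_integral_preimage _ _ (measurable_fun_shift c) shift_ocitv
  `[(a + c)%R, (b + c)%R]) //.
  by rewrite preimage_itv !addrK.
exact: measurable_funS mpsi.
Qed.

Lemma ge0_integral_itv_reflect (c a b : R) :
  (\int[mu]_(x in `[a, b]) psi (c - x) =
   \int[mu]_(x in `[(c - b)%R, (c - a)%R]) psi x)%E.
Proof.
have preimage_itv (b1 b2 : bool) (x y : R) :
    (fun z => c - z) @^-1` [set` Interval (BSide b1 x) (BSide b2 y)] =
    [set` Interval (BSide (~~ b2) (c - y)) (BSide (~~ b1) (c - x))].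
  by apply/seteqP; split=> z; case: b1 b2 => -[];
    rewrite /= !in_itv /= => /andP[? ?]; apply/andP; split; lra.
have reflect_ocitv x y : mu ((fun z => c - z) @^-1` `]x, y]) = mu `]x, y].
  rewrite preimage_itv !lebesgue_measure_itv /= !lte_fin ltrD2l ltrN2 -!EFinB.
  by congr (if _ then _%:E else _); ring.
rewrite -(@ge0_integral_preimage _ _ (measurable_fun_reflect c) reflect_ocitv
  `[(c - b)%R, (c - a)%R]) //.
  by rewrite preimage_itv !subKr.
exact: measurable_funS mpsi.
Qed.

Lemma ge0_integral_itv_split (a b c : R) : a <= b <= c ->
  (\int[mu]_(x in `[a, c]) psi x =
   \int[mu]_(x in `[a, b]) psi x + \int[mu]_(x in `[b, c]) psi x)%E.
Proof.
move=> /andP[ab bc].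
rewrite (@itv_bndbnd_setU _ _ (BLeft a) (BLeft b) (BRight c)) ?bnd_simp //.
rewrite ge0_integral_setU //.
- by rewrite integral_itv_bndo_bndc //; exact: measurable_funS mpsi.
- exact: measurable_funS mpsi.
- apply/disj_setPS => x [] /=; rewrite !in_itv /= => /andP[_ xb] /andP[bx _].
  by have := lt_le_trans xb bx; rewrite ltxx.
Qed.

Lemma ge0_integral_itv_periodic (p a : R) :
  0 < p -> (forall x, psi (x + p) = psi x) ->
  (\int[mu]_(x in `[a, (a + p)%R]) psi x = \int[mu]_(x in `[0%R, p]) psi x)%E.
Proof.
move=> p0 psip; wlog /andP[a0 ap] : a / 0 <= a <= p.
  move=> in_period; have [k /andP[k0 kp]] := intmul_shift_itv a p0.
  have -> : a + p = a - p *~ k + p + p *~ k by rewrite addrAC subrK.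
  rewrite -[X in `[X, _]](subrK (p *~ k) a) -ge0_integral_itv_shift.
  under eq_integral do rewrite periodicz //.
  by apply: in_period; rewrite k0 ltW.
rewrite (ge0_integral_itv_split (b := p)); last by apply/andP; split; lra.
rewrite [RHS](ge0_integral_itv_split (b := a)) ?a0 // addeC; congr (_ + _)%E.
rewrite -[p in `[p, _]]add0r -ge0_integral_itv_shift.
by apply: eq_integral => x _; rewrite psip.
Qed.

End lebesgue_integral_change_of_variables.

Section complex_modulus.
Context {R : realType}.
Implicit Types w z : R[i].

Lemma cmodE z : cmod z = Num.sqrt (complex.Re z ^+ 2 + complex.Im z ^+ 2).
Proof. by case: z. Qed.

Lemma cmod_ge0 z : 0 <= cmod z.
Proof. by rewrite cmodE sqrtr_ge0. Qed.

Lemma normr_Re_le_cmod z : `|complex.Re z| <= cmod z.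
Proof. by rewrite cmodE -sqrtr_sqr ler_sqrt ?addr_ge0 ?sqr_ge0 // lerDl sqr_ge0. Qed.

Lemma normr_Im_le_cmod z : `|complex.Im z| <= cmod z.
Proof. by rewrite cmodE -sqrtr_sqr ler_sqrt ?addr_ge0 ?sqr_ge0 // lerDr sqr_ge0. Qed.

Lemma cmodM w z : cmod (w * z) = cmod w * cmod z.
Proof. exact: Normc.normcM. Qed.

Lemma cmodB_le w z : cmod (w - z) <= cmod w + cmod z.
Proof. by rewrite /cmod -(normcN z); exact: le_normcD. Qed.

Lemma cmod_real (c : R) : 0 <= c -> cmod c%:C%C = c.
Proof. by move=> c0; rewrite cmodE /= expr0n addr0 sqrtr_sqr ger0_norm. Qed.

Lemma ReIm_dot_le w z :
  complex.Re w * complex.Re z + complex.Im w * complex.Im z <= cmod w * cmod z.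
Proof.
rewrite !cmodE -sqrtrM ?addr_ge0 ?sqr_ge0 //; apply: le_trans (ler_norm _) _.
rewrite -sqrtr_sqr ler_sqrt ?mulr_ge0 ?addr_ge0 ?sqr_ge0 //.
have := sqr_ge0 (complex.Re w * complex.Im z - complex.Im w * complex.Re z); nra.
Qed.

Lemma cmodB_le2 w z : cmod w <= 1 -> cmod z <= 1 -> cmod (w - z) <= 2.
Proof. by move=> w1 z1; apply: le_trans (cmodB_le _ _) _; rewrite -[2]/(1 + 1) lerD. Qed.

End complex_modulus.

Section complex_measurable.
Context {R : realType}.
Implicit Types h : R -> R[i].

Definition cmeasurable h : Prop :=
  measurable_fun setT (fun x => complex.Re (h x)) /\
  measurable_fun setT (fun x => complex.Im (h x)).

Lemma cmeasurable_comp h (phi : R -> R) :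
  cmeasurable h -> measurable_fun setT phi -> cmeasurable (fun x => h (phi x)).
Proof.
by move=> [mRe mIm] mphi; split; [exact: measurableT_comp mRe mphi|
  exact: measurableT_comp mIm mphi].
Qed.

Lemma cmeasurableB h1 h2 :
  cmeasurable h1 -> cmeasurable h2 -> cmeasurable (fun x => h1 x - h2 x).
Proof.
move=> [mRe1 mIm1] [mRe2 mIm2]; split.
- rewrite (_ : (fun x => _) = fun x => complex.Re (h1 x) - complex.Re (h2 x)).
    exact: measurable_funB.
  by apply/funext => x; case: (h1 x) (h2 x) => ? ? [].
- rewrite (_ : (fun x => _) = fun x => complex.Im (h1 x) - complex.Im (h2 x)).
    exact: measurable_funB.
  by apply/funext => x; case: (h1 x) (h2 x) => ? ? [].
Qed.

Lemma cmeasurableM h1 h2 :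
  cmeasurable h1 -> cmeasurable h2 -> cmeasurable (fun x => h1 x * h2 x).
Proof.
move=> [mRe1 mIm1] [mRe2 mIm2]; split.
- rewrite (_ : (fun x => _) = fun x => complex.Re (h1 x) * complex.Re (h2 x)
                                    - complex.Im (h1 x) * complex.Im (h2 x)).
    by apply: measurable_funB; exact: measurable_funM.
  by apply/funext => x; case: (h1 x) (h2 x) => ? ? [].
- rewrite (_ : (fun x => _) = fun x => complex.Re (h1 x) * complex.Im (h2 x)
                                    + complex.Im (h1 x) * complex.Re (h2 x)).
    by apply: measurable_funD; exact: measurable_funM.
  by apply/funext => x; case: (h1 x) (h2 x) => ? ? [].
Qed.

Lemma cmeasurable_shiftB h (r : R) :
  cmeasurable h -> cmeasurable (fun x => h (x + r) - h x).
Proof.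
by move=> mh; exact: cmeasurableB (cmeasurable_comp mh (measurable_fun_shift r)) mh.
Qed.

Lemma measurable_cmod h :
  cmeasurable h -> measurable_fun setT (fun x => cmod (h x)).
Proof.
move=> [mRe mIm]; under eq_fun do rewrite cmodE.
apply: measurableT_comp (continuous_measurable_fun (@sqrt_continuous R)) _.
by apply: measurable_funD; exact: measurable_funX.
Qed.

End complex_measurable.

Section complex_integral.
Context {R : realType}.
Local Notation mu := (@lebesgue_measure R).
Variables (D : set R) (mD : measurable D) (Dfin : (mu D < +oo)%E).
Implicit Types (h : R -> R[i]) (M : R).

Lemma integrable_bounded (u : R -> R) M : measurable_fun D u ->
  (forall x, D x -> `|u x| <= M) -> mu.-integrable D (EFin \o u).
Proof.
move=> um uM; apply: measurable_bounded_integrable => //.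
rewrite /bounded_near; near=> M' => x Dx /=; rewrite (le_trans (uM x Dx)) //.
Unshelve. all: by end_near. Qed.

Lemma integrableZl_EFin (k : R) (u : R -> R) : mu.-integrable D (EFin \o u) ->
  mu.-integrable D (EFin \o (fun x => k * u x)).
Proof. exact: (@integrableZl _ _ _ mu D mD k (EFin \o u)). Qed.

Lemma integrableD_EFin (u v : R -> R) : mu.-integrable D (EFin \o u) ->
  mu.-integrable D (EFin \o v) -> mu.-integrable D (EFin \o (fun x => u x + v x)).
Proof. exact: (@integrableD _ _ _ mu D mD (EFin \o u) (EFin \o v)). Qed.

Section bounded.
Variables (h : R -> R[i]) (M : R).
Hypotheses (mh : cmeasurable h) (hM : forall x, cmod (h x) <= M).

Lemma integrable_Re : mu.-integrable D (EFin \o (fun x => complex.Re (h x))).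
Proof.
apply: (integrable_bounded (M := M)); first exact: measurable_funS mh.1.
by move=> x _; exact: le_trans (normr_Re_le_cmod _) (hM x).
Qed.

Lemma integrable_Im : mu.-integrable D (EFin \o (fun x => complex.Im (h x))).
Proof.
apply: (integrable_bounded (M := M)); first exact: measurable_funS mh.2.
by move=> x _; exact: le_trans (normr_Im_le_cmod _) (hM x).
Qed.

Lemma integrable_cmod : mu.-integrable D (EFin \o (fun x => cmod (h x))).
Proof.
apply: (integrable_bounded (M := M)).
  exact: measurable_funS (measurable_cmod mh).
by move=> x _; rewrite ger0_norm ?cmod_ge0.
Qed.

Lemma cmod_cintegral_le :
  cmod (cintegral D h) <= Rintegral mu D (fun x => cmod (h x)).
Proof.
(* With w the integral, |w|^2 = int (Re w Re h + Im w Im h) <= |w| int |h|. *)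
set w := cintegral D h; have [->|w0] := eqVneq (cmod w) 0.
  by apply: Rintegral_ge0 => x _; exact: cmod_ge0.
have wE : cmod w * cmod w = Rintegral mu D (fun x =>
    complex.Re w * complex.Re (h x) + complex.Im w * complex.Im (h x)).
  rewrite RintegralD ?RintegralZl //.
  - by rewrite -expr2 cmodE sqr_sqrtr ?addr_ge0 ?sqr_ge0 // !expr2.
  - exact: integrable_Im.
  - exact: integrable_Re.
  - exact: integrableZl_EFin integrable_Re.
  - exact: integrableZl_EFin integrable_Im.
have w_gt0 : 0 < cmod w by rewrite lt_neqAle eq_sym w0 cmod_ge0.
rewrite -(ler_pM2l w_gt0) wE -RintegralZl //; last exact: integrable_cmod.
apply: le_Rintegral => //; last by move=> x _; exact: ReIm_dot_le.
- by apply: integrableD_EFin; apply: integrableZl_EFin;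
    [exact: integrable_Re | exact: integrable_Im].
- exact: integrableZl_EFin integrable_cmod.
Qed.

End bounded.

Lemma cintegralB (h1 h2 : R -> R[i]) M : cmeasurable h1 -> cmeasurable h2 ->
  (forall x, cmod (h1 x) <= M) -> (forall x, cmod (h2 x) <= M) ->
  cintegral D (fun x => h1 x - h2 x) = cintegral D h1 - cintegral D h2.
Proof.
move=> mh1 mh2 h1M h2M; rewrite /cintegral.
have ReB x : complex.Re (h1 x - h2 x) = complex.Re (h1 x) - complex.Re (h2 x).
  by case: (h1 x) (h2 x) => ? ? [].
have ImB x : complex.Im (h1 x - h2 x) = complex.Im (h1 x) - complex.Im (h2 x).
  by case: (h1 x) (h2 x) => ? ? [].
rewrite (eq_Rintegral mu (fun x _ => ReB x)) (eq_Rintegral mu (fun x _ => ImB x)).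
by rewrite !RintegralB //;
  [exact: integrable_Im mh1 h1M | exact: integrable_Im mh2 h2M
  |exact: integrable_Re mh1 h1M | exact: integrable_Re mh2 h2M].
Qed.

End complex_integral.

Section lebesgue_Rintegral_periodic.
Context {R : realType}.
Local Notation mu := (@lebesgue_measure R).

Lemma Rintegral_itv_reflect_periodic (psi : R -> R) (p t : R) : 0 < p ->
  measurable_fun setT psi -> (forall x, 0 <= psi x) ->
  (forall x, psi (x + p) = psi x) ->
  Rintegral mu `[0, p] (fun x => psi (t - x)) = Rintegral mu `[0, p] psi.
Proof.
move=> p0 mpsi psi0 psip; rewrite /Rintegral; congr fine.
have mEpsi : measurable_fun setT (EFin \o psi) by exact/measurable_EFinP.
have Epsi0 x : (0 <= (EFin \o psi) x)%E by rewrite lee_fin.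
rewrite (ge0_integral_itv_reflect mEpsi Epsi0) subr0.
rewrite -[X in `[_, X]](subrK p t) ge0_integral_itv_periodic //.
by move=> x /=; rewrite psip.
Qed.

End lebesgue_Rintegral_periodic.

Section convolution_continuity.
Context {R : realType}.
Local Notation mu := (@lebesgue_measure R).
Implicit Types (f g : R -> R[i]) (L : R).

Let pi2_gt0 : 0 < 2 * pi :> R.
Proof. by rewrite mulr_gt0 ?pi_gt0. Qed.

Let pi2_inv_ge0 : 0 <= (2 * pi)^-1 :> R.
Proof. by rewrite invr_ge0 ltW. Qed.

Let period_measurable : measurable (`[0, 2 * pi] : set R).
Proof. exact: measurable_itv. Qed.

Let period_finite : (mu `[0%R, (2 * pi)%R] < +oo)%E.
Proof. by rewrite lebesgue_measure_itv /=; case: ifP; rewrite ?ltry. Qed.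

Lemma convolution_periodic f g : periodic2pi f ->
  forall t, convolution f g (t + 2 * pi) = convolution f g t.
Proof.
move=> fp t; rewrite /convolution; congr (_ * cintegral _ _).
by apply/funext => x; rewrite addrAC fp.
Qed.

Lemma cmod_convolution_shift_le f g (t r : R) : in_PF f -> in_PF g ->
  cmod (convolution f g (t + r) - convolution f g t) <=
  (2 * pi)^-1 * Rintegral mu `[0, 2 * pi] (fun s => cmod (f (s + r) - f s)).
Proof.
move=> [fp mfRe mfIm _ f1] [_ mgRe mgIm _ g1].
have mf : cmeasurable f by []; have mg : cmeasurable g by [].
have mfgN c : cmeasurable (fun x => f (c - x) * g x).
  exact: cmeasurableM (cmeasurable_comp mf (measurable_fun_reflect c)) mg.
have fgN_le1 c x : cmod (f (c - x) * g x) <= 1.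
  by rewrite cmodM -[1]mulr1 ler_pM ?cmod_ge0.
set u := fun x => f (t + r - x) * g x - f (t - x) * g x.
set v := fun x => f (t - x + r) - f (t - x).
have u_meas : cmeasurable u by exact: cmeasurableB.
have v_meas : cmeasurable v.
  exact: cmeasurable_comp (cmeasurable_shiftB r mf) (measurable_fun_reflect t).
have u_le2 x : cmod (u x) <= 2 by exact: cmodB_le2.
have v_le2 x : cmod (v x) <= 2 by exact: cmodB_le2.
have intD := integrable_cmod period_measurable period_finite.
rewrite /convolution -mulrBr -(cintegralB period_measurable period_finite
  (mfgN _) (mfgN _) (fgN_le1 _) (fgN_le1 _)).
rewrite cmodM cmod_real // ler_wpM2l //.
apply: le_trans (cmod_cintegral_le period_measurable period_finite u_meas u_le2) _.
apply: le_trans (le_Rintegral (mu := mu) period_measurable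
  (intD _ _ u_meas u_le2) (intD _ _ v_meas v_le2) _) _.
  by move=> x _; rewrite /u /v addrAC -mulrBl cmodM ler_piMr ?cmod_ge0.
rewrite -(Rintegral_itv_reflect_periodic
  (psi := fun s => cmod (f (s + r) - f s)) t) //.
- exact: measurable_cmod (cmeasurable_shiftB r mf).
- by move=> x; exact: cmod_ge0.
- by move=> x; rewrite addrAC !fp.
Qed.

Lemma mean_shift_le f L (d r : R) : in_PF f -> mean_lipschitz_smooth f L ->
  0 < d <= pi -> - d <= r <= d ->
  (2 * pi)^-1 * Rintegral mu `[0, 2 * pi] (fun s => cmod (f (s + r) - f s))
  <= L * d.
Proof.
move=> [_ mfRe mfIm _ f1] fL dpi rd; have mf : cmeasurable f by [].
have fB_le2 x : cmod (f (x + r) - f x) <= 2 by exact: cmodB_le2.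
have fB_int := integrable_cmod period_measurable period_finite
  (cmeasurable_shiftB r mf) fB_le2.
rewrite -lee_fin; apply: le_trans (fL d dpi).
rewrite EFinM /Rintegral fineK; last exact: integrable_fin_num fB_int.
apply: lee_wpmul2l; first by rewrite lee_fin.
apply: ge0_le_integral_nonmeasurable => x _; first by rewrite lee_fin cmod_ge0.
by apply: ereal_sup_ubound; exists r => //=; rewrite in_itv.
Qed.

Lemma mean_lipschitz_ge0 f L : in_PF f -> mean_lipschitz_smooth f L -> 0 <= L.
Proof.
move=> hf fL; have pi_gt0 : 0 < pi :> R by exact: pi_gt0.
have mean_ge0 : 0 <= (2 * pi)^-1 *
    Rintegral mu `[0, 2 * pi] (fun s => cmod (f (s + 0) - f s)).
  by rewrite mulr_ge0 // Rintegral_ge0 // => x _; exact: cmod_ge0.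
rewrite -(pmulr_lge0 _ pi_gt0); apply: le_trans mean_ge0 (mean_shift_le hf fL _ _).
- by rewrite pi_gt0 lexx.
- by rewrite oppr_le0 andbb ltW.
Qed.

End convolution_continuity.

Theorem lemma2 (R : realType) (f g : R -> R[i]) (L : R) :
  in_PF f -> in_PF g -> mean_lipschitz_smooth f L -> lipschitz_cont (convolution f g) L.
Proof.
move=> hf hg fL t d d_gt0; apply: ge_ereal_sup => _ [r rdd <-].
have /andP[rl ru] : - d <= r <= d by move: rdd => /=; rewrite in_itv.
rewrite lee_fin; have [dpi|pid] := leP d pi.
  apply: le_trans (cmod_convolution_shift_le t r hf hg) _.
  by apply: (mean_shift_le hf fL); apply/andP.
have pi2_gt0 : 0 < 2 * pi :> R by rewrite mulr_gt0 ?pi_gt0.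
have [k /andP[k0 kpi]] := intmul_shift_itv (r + pi) pi2_gt0.
have -> : t + r = t + (r - (2 * pi) *~ k) + (2 * pi) *~ k by rewrite addrA subrK.
have [fp _ _ _ _] := hf; rewrite (periodicz (convolution_periodic g fp)).
apply: le_trans (cmod_convolution_shift_le _ _ hf hg) _.
apply: le_trans (mean_shift_le (d := pi) hf fL _ _) _.
- by rewrite pi_gt0 lexx.
- by apply/andP; split; lra.
- by rewrite ler_wpM2l ?(mean_lipschitz_ge0 hf fL) ?ltW.
Qed.
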